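(* Let $k\ge1$, let $K=\Delta_n^{(k)}$ be the $k$-skeleton of the $n$-simplex, let $M$ be a closed PL $2k$-manifold, and let $\psi\colon C_k(K;\mathbb{Z}_2)\to H_k(M;\mathbb{Z}_2)$ be a homomorphism. Let $J$ be an induced subcomplex of $K$ on $2k+3$ vertices. Then for every vertex $v$ of $J$, $$\sum_{\{\sigma',\tau'\}\in P_J}\Omega(\psi(\sigma'),\psi(\tau'))=\sum_{\{\sigma,\tau\}\in P_{J,v}}\Omega\big(\psi(\partial(\sigma*\{v\})),\psi(\partial(\tau*\{v\}))\big),$$ where $P_J$ is the set of unordered pairs $\{\sigma',\tau'\}$ of disjoint $k$-simplices of $J$, $P_{J,v}$ is the set of unordered pairs $\{\sigma,\tau\}$ of disjoint $k$-simplices of $J$ not containing $v$, and $\sigma*\{v\}$ is the $(k+1)$-simplex spanned by the vertices of $\sigma$ and $v$.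
   Context: All coefficients are $\mathbb{Z}_2$. $\Omega$ is the mod-2 intersection form of $M$ on $H_k(M;\mathbb{Z}_2)$, a symmetric bilinear form. For a $(k+1)$-simplex $\kappa$, $\partial\kappa\in C_k(K;\mathbb{Z}_2)$ is the sum of its $k$-faces. *)

From HB Require Import structures.
From mathcomp Require Import all_boot all_order all_algebra.
Set Implicit Arguments. Unset Strict Implicit. Unset Printing Implicit Defensive.
Import GRing.Theory.
Local Open Scope ring_scope.

(* Vertices of the n-simplex Delta_n are 'I_n.+1; a vertex set is 'I_m below. *)
Notation simplex m d := {A : {set 'I_m} | #|A| == d.+1}.

Notation chain m d := {ffun simplex m d -> ('F_2)^o}.

Definition echain (m d : nat) (s : simplex m d) : chain m d :=
  [ffun t : simplex m d => ((t == s) : nat)%:R].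

(* Boundary of a (d+1)-simplex kappa (given by its vertex set of size d+2):
   the sum of its d-faces, i.e. of the d-simplices contained in kappa. *)
Definition bnd (m d : nat) (kappa : {set 'I_m}) : chain m d :=
  [ffun t : simplex m d => ((val t \subset kappa) : nat)%:R].

From HB Require Import structures.
From mathcomp Require Import all_boot all_order all_algebra.
From mathcomp Require Import zify.
Set Implicit Arguments. Unset Strict Implicit. Unset Printing Implicit Defensive.
Import GRing.Theory.

(* Expanding the boundaries by bilinearity turns the right-hand side into
   sum_(a, b) c(a, b) Omega(psi a, psi b), where c(a, b) counts the pairs s < t
   of disjoint k-simplices of J - v such that a is a face of s * v and b one of
   t * v.  Diagonal terms vanish: a - v has k >= 1 vertices and cannot lie in
   both s and t.  Off the diagonal, c(a, b) + c(b, a) counts ordered pairs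
   (s, t); since s and t partition the 2k + 2 vertices of J - v, this is the
   number of ways to extend a - v to s while avoiding b - v, namely
   binom([v in a] + [v in b], [v in a]).  That is odd exactly when a and b do
   not both contain v, i.e. (as a - v and b - v must be disjoint) exactly when
   a and b are disjoint. *)

Definition disjoint_in (T : finType) (U S S' : {set T}) : bool :=
  [&& S \subset U, S' \subset U & S :&: S' == set0].

Lemma disjoint_inC (T : finType) (U S S' : {set T}) :
  disjoint_in U S S' = disjoint_in U S' S.
Proof. by rewrite /disjoint_in setIC andbCA. Qed.

Lemma card_le1_subset_cones (T : finType) (x : T) (A S S' : {set T}) :
  S :&: S' = set0 -> A \subset x |: S -> A \subset x |: S' -> #|A| <= 1.
Proof.
move=> SS' AS AS'; have : A \subset x |: (S :&: S') by rewrite setUIr subsetI AS.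
by rewrite SS' setU0 => /subset_leq_card; rewrite cards1.
Qed.

Lemma setI_eq0_D1 (T : finType) (x : T) (A B : {set T}) :
  (A :\ x) :&: (B :\ x) = set0 -> (A :&: B == set0) = (x \notin A :&: B).
Proof.
move=> ABx; have : A :&: B \subset [set x] by rewrite -setD_eq0 setDIl ABx.
by rewrite subset1 => /orP[]/eqP->; rewrite ?inE ?eqxx // -cards_eq0 cards1.
Qed.

Section SubsetCounting.
Variables (T : finType) (K : nat).
Local Notation subset_of_size := {S : {set T} | #|S| == K}.

Lemma card_supsets_within (A U : {set T}) : A \subset U -> #|A| <= K ->
  #|[set S : subset_of_size | A \subset val S & val S \subset U]|
  = 'C(#|U| - #|A|, K - #|A|).
Proof.
move=> AU leAK; set D := [set S | _].
have SE S : S \in D -> val S = A :|: (val S :\: A).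
  by rewrite inE => /andP[AS _]; rewrite -{1}(setID (val S) A) (setIidPr AS).
have inj : {in D &, injective (fun S : subset_of_size => val S :\: A)}.
  by move=> S S' DS DS' eSS'; apply: val_inj; rewrite (SE S) // (SE S') // eSS'.
rewrite -(card_in_imset inj) -cardsDS // -cards_draws; apply: eq_card => X.
rewrite inE; apply/imsetP/andP => [[S] | [/subsetDP[XU XA] /eqP cardX]].
  rewrite inE => /andP[AS SU] ->; split; first exact: setSD.
  by rewrite cardsDS // (eqP (valP S)).
have cardXA : #|X :|: A| == K.
  by rewrite cardsU (disjoint_setI0 XA) cards0 cardX subn0 subnK.
exists (Sub (X :|: A) cardXA); last by rewrite /= setDUl setDv setU0; apply/esym/setDidPl.
by rewrite /D inE /= subsetUr subUset AU XU.
Qed.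

Lemma card_complementary_pairs (U A B : {set T}) : #|U| = K + K -> B \subset U ->
  #|[set p : subset_of_size * subset_of_size |
     [&& disjoint_in U (val p.1) (val p.2), A \subset val p.1 & B \subset val p.2]]|
  = #|[set S : subset_of_size | A \subset val S & val S \subset U :\: B]|.
Proof.
move=> cardU BU; set D := [set p | _].
have p2E p : p \in D -> val p.2 = U :\: val p.1.
  rewrite inE => /and3P[/and3P[p1U p2U] p12 _ _]; apply/eqP.
  rewrite eqEcard subsetD p2U -setI_eq0 setIC p12.
  by rewrite cardsDS // cardU (eqP (valP p.1)) (eqP (valP p.2)) addnK leqnn.
have inj : {in D &, injective (fun p : subset_of_size * subset_of_size => p.1)}.
  move=> [s t] [s' t'] Dp Dq /= ss'; congr pair => //; apply: val_inj.
  by rewrite (p2E _ Dp) (p2E _ Dq) /= ss'.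
rewrite -(card_in_imset inj); apply: eq_card => S; rewrite inE.
apply/imsetP/andP => [[[s t]] | [AS /subsetDP[SU SB]]].
  rewrite inE => /and3P[/and3P[sU _ /eqP st] As Bt] -> /=; split => //.
  by rewrite subsetD sU (disjointWr Bt) // -setI_eq0 st.
have cardUS : #|U :\: val S| == K by rewrite cardsDS // cardU (eqP (valP S)) addnK.
exists (S, Sub (U :\: val S) cardUS) => //.
rewrite /D inE /= /disjoint_in SU subsetDl setIDA setD_eq0 subsetIl AS /=.
by rewrite subsetD BU disjoint_sym.
Qed.

Lemma odd_card_cone_pairs (U : {set T}) (v : T) (a b : subset_of_size) :
  v \notin U -> #|U| = K + K ->
  odd #|[set p : subset_of_size * subset_of_size |
         [&& disjoint_in U (val p.1) (val p.2), val a \subset v |: val p.1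
           & val b \subset v |: val p.2]]|
  = disjoint_in (v |: U) (val a) (val b).
Proof.
move=> vU cardU; set A := val a :\ v; set B := val b :\ v.
under eq_finset => p do rewrite -!subDset -/A -/B.
rewrite [disjoint_in (v |: U) _ _]/disjoint_in -!subDset -/A -/B.
have [/and3P[AU BU /eqP AB] | ] := boolP [&& A \subset U, B \subset U & A :&: B == set0].
  have cardA : #|val a| = K by apply/eqP/(valP a).
  have cardB : #|val b| = K by apply/eqP/(valP b).
  have leAK : #|A| <= K by rewrite -cardA subset_leq_card ?subsetDl.
  rewrite card_complementary_pairs // (@card_supsets_within A (U :\: B)) //; last first.
    by rewrite subsetD AU -setI_eq0 AB eqxx.
  rewrite AU BU (setI_eq0_D1 AB) inE cardsDS // cardU.
  have := cardsD1 v (val a); have := cardsD1 v (val b); rewrite -/A -/B cardA cardB.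
  move=> eB eA.
  have -> : K + K - #|B| - #|A| = ((v \in val a) : nat) + (v \in val b) by lia.
  have -> : K - #|A| = (v \in val a) by lia.
  by case: (v \in val a); case: (v \in val b).
move=> notAB; rewrite (_ : [set p | _] = set0) ?cards0; last first.
  apply/setP => p; rewrite !inE; apply: contraNF notAB.
  case/and3P => /and3P[p1U p2U /eqP p12] Ap1 Bp2.
  by rewrite (subset_trans Ap1 p1U) (subset_trans Bp2 p2U) -subset0 -p12 setISS.
apply/esym; apply: contraNF notAB => /and3P[-> -> ab] /=.
by rewrite -subset0 -(eqP ab) setISS ?subsetDl.
Qed.
End SubsetCounting.

Local Open Scope ring_scope.

Lemma sum_pairs_split (I : finType) (V : nmodType) (F : I -> I -> V) :
  \sum_i \sum_j F i j
  = \sum_i \sum_(j | (enum_rank i < enum_rank j)%N) (F i j + F j i) + \sum_i F i i.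
Proof.
have split_row i : \sum_j F i j
    = \sum_(j | (enum_rank i < enum_rank j)%N) F i j
      + \sum_(j | (enum_rank j < enum_rank i)%N) F i j + F i i.
  rewrite (bigID (fun j => enum_rank i < enum_rank j)%N) /= -addrA; congr (_ + _).
  rewrite (bigD1 i) ?ltnn //= addrC; congr (_ + _); apply: eq_bigl => j.
  by rewrite -leqNgt ltn_neqAle andbC (inj_eq val_inj) (inj_eq enum_rank_inj).
under eq_bigr do rewrite split_row.
rewrite !big_split /=; congr (_ + _); under [RHS]eq_bigr do rewrite big_split.
by rewrite [RHS]big_split; congr (_ + _); apply: (exchange_big_dep xpredT).
Qed.

Lemma sum_cond_indicator (I : finType) (R : pzSemiRingType) (P Q : pred I)
    (F : I -> R) :
  \sum_(i | P i && Q i) F i = \sum_(i | Q i) (P i)%:R * F i.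
Proof.
by rewrite big_mkcondl; apply: eq_bigr => i _; case: (P i); rewrite ?mul1r ?mul0r.
Qed.

Lemma sum_indicator (I : finType) (R : pzSemiRingType) (P : pred I) (F : I -> R) :
  \sum_(i | P i) F i = \sum_i (P i)%:R * F i.
Proof.
by rewrite big_mkcond; apply: eq_bigr => i _; case: (P i); rewrite ?mul1r ?mul0r.
Qed.

Lemma sum_indicator_card (I : finType) (R : pzSemiRingType) (P : pred I) :
  \sum_i (P i)%:R = #|[set i | P i]|%:R :> R.
Proof.
by rewrite -sum1dep_card natr_sum [RHS]big_mkcond; apply: eq_bigr => i _; case: (P i).
Qed.

Lemma natr_andb (R : pzSemiRingType) (b1 b2 : bool) :
  (b1 && b2)%:R = b1%:R * b2%:R :> R.
Proof. by rewrite -natrM mulnb. Qed.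

Lemma natrF2 (n : nat) : n%:R = (odd n)%:R :> 'F_2.
Proof. by rewrite -modn2 Fp_nat_mod. Qed.

Lemma exchange_big_pairs (I J : finType) (V : nmodType) (P : I -> I -> bool)
    (F : I -> I -> J -> J -> V) :
  \sum_i \sum_(i' | P i i') \sum_j \sum_j' F i i' j j'
  = \sum_j \sum_j' \sum_i \sum_(i' | P i i') F i i' j j'.
Proof.
rewrite pair_big_dep /= pair_bigA /=; under eq_bigr do rewrite pair_bigA /=.
rewrite exchange_big; apply: eq_bigr => q _.
by rewrite pair_big_dep.
Qed.

Section ConePairs.
Variables (m k : nat) (W : {set 'I_m}) (v : 'I_m).
Hypotheses (k_gt0 : (0 < k)%N) (vW : v \in W) (cardW : #|W| = (2 * k + 3)%N).
Local Notation ksimplex := (simplex m k).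
Local Notation U := (W :\ v).

Lemma cardWD1 : #|U| = (k.+1 + k.+1)%N.
Proof. by move: (cardsD1 v W); rewrite vW cardW add1n addnS => -[<-]; lia. Qed.

Definition cone_incidence (s t a b : ksimplex) : bool :=
  [&& disjoint_in U (val s) (val t), val a \subset v |: val s & val b \subset v |: val t].

Definition cone_pairs_coef (a b : ksimplex) : 'F_2 :=
  \sum_(s : ksimplex) \sum_(t : ksimplex | (enum_rank s < enum_rank t)%N)
    (cone_incidence s t a b)%:R.

Lemma cone_pairs_coef_diag a : cone_pairs_coef a a = 0.
Proof.
apply: big1 => s _; apply: big1 => t _; rewrite /cone_incidence.
case/boolP: (disjoint_in _ _ _) => [/and3P[_ _ /eqP st] | _] //=.
case/boolP: (_ && _) => [/andP[aS aT] | _] //.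
have := card_le1_subset_cones st aS aT.
by rewrite (eqP (valP a)) ltnS leqNgt k_gt0.
Qed.

Lemma cone_pairs_coef_sym a b :
  cone_pairs_coef a b + cone_pairs_coef b a = (disjoint_in W (val a) (val b))%:R.
Proof.
transitivity (\sum_(s : ksimplex) \sum_(t : ksimplex) (cone_incidence s t a b)%:R : 'F_2).
  rewrite sum_pairs_split [X in _ = _ + X]big1 ?addr0 => [|s _]; last first.
    by rewrite /cone_incidence /disjoint_in setIid -cards_eq0 (eqP (valP s)) !andbF.
  rewrite -big_split; apply: eq_bigr => s _; rewrite -big_split.
  apply: eq_bigr => t _; congr (_ + _).
  by rewrite /cone_incidence disjoint_inC [X in _ && X]andbC.
rewrite pair_bigA sum_indicator_card natrF2 [in RHS](esym (setD1K vW)).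
by rewrite odd_card_cone_pairs ?setD11 ?cardWD1.
Qed.

Lemma sum_cone_pairs (g : ksimplex -> ksimplex -> 'F_2) :
  (forall a b, g a b = g b a) ->
  \sum_(s : ksimplex) \sum_(t : ksimplex |
        disjoint_in U (val s) (val t) && (enum_rank s < enum_rank t)%N)
     \sum_(a : ksimplex | val a \subset v |: val s)
     \sum_(b : ksimplex | val b \subset v |: val t) g a b
  = \sum_(a : ksimplex) \sum_(b : ksimplex |
        disjoint_in W (val a) (val b) && (enum_rank a < enum_rank b)%N) g a b.
Proof.
move=> gC.
transitivity (\sum_(s : ksimplex) \sum_(t : ksimplex | (enum_rank s < enum_rank t)%N)
    \sum_(a : ksimplex) \sum_(b : ksimplex) (cone_incidence s t a b)%:R * g a b).
  apply: eq_bigr => s _; rewrite sum_cond_indicator; apply: eq_bigr => t _.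
  rewrite sum_indicator mulr_sumr; apply: eq_bigr => a _.
  rewrite sum_indicator !mulr_sumr; apply: eq_bigr => b _.
  by rewrite !natr_andb !mulrA.
rewrite exchange_big_pairs.
transitivity (\sum_(a : ksimplex) \sum_(b : ksimplex) cone_pairs_coef a b * g a b).
  apply: eq_bigr => a _; apply: eq_bigr => b _.
  by rewrite mulr_suml; apply: eq_bigr => s _; rewrite mulr_suml.
rewrite sum_pairs_split [X in _ + X]big1 ?addr0 => [|a _]; last first.
  by rewrite cone_pairs_coef_diag mul0r.
apply: eq_bigr => a _; rewrite sum_cond_indicator; apply: eq_bigr => b _.
by rewrite [g b a]gC -mulrDl cone_pairs_coef_sym.
Qed.
End ConePairs.

Section SymmetricBiadditive.
Variables (H V : zmodType) (Omega : H -> H -> V).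
Hypotheses (OmegaDl : forall x y z, Omega (x + y) z = Omega x z + Omega y z)
           (OmegaC : forall x y, Omega x y = Omega y x).

Lemma Omega0l y : Omega 0 y = 0.
Proof. by apply: (@addrI _ (Omega 0 y)); rewrite -OmegaDl !addr0. Qed.

Lemma Omega_suml (I : finType) (P : pred I) (F : I -> H) y :
  Omega (\sum_(i | P i) F i) y = \sum_(i | P i) Omega (F i) y.
Proof. exact: (big_morph (Omega^~ y) (fun x x' => OmegaDl x x' y) (Omega0l y)). Qed.

Lemma Omega_sum (I J : finType) (P : pred I) (Q : pred J) (F : I -> H) (G : J -> H) :
  Omega (\sum_(i | P i) F i) (\sum_(j | Q j) G j)
  = \sum_(i | P i) \sum_(j | Q j) Omega (F i) (G j).
Proof.
rewrite Omega_suml; apply: eq_bigr => i _.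
by rewrite OmegaC Omega_suml; apply: eq_bigr => j _; rewrite OmegaC.
Qed.
End SymmetricBiadditive.

Lemma bndE (m d : nat) (X : {set 'I_m}) :
  bnd d X = \sum_(a : simplex m d | val a \subset X) echain a.
Proof.
apply/ffunP=> t; rewrite sum_ffunE ffunE.
have [tX | tNX] := boolP (val t \subset X).
  rewrite (bigD1 t) //= ffunE eqxx big1 ?addr0 // => a /andP[_ ta].
  by rewrite ffunE eq_sym (negbTE ta).
by rewrite big1 // => a aX; rewrite ffunE; case: eqP => // ta; rewrite ta aX in tNX.
Qed.

Theorem lemma17 (k n : nat) (Hk : (0 < k)%N)
  (H : lmodType 'F_2) (Omega : H -> H -> 'F_2)
  (OmegaD : forall x y z, Omega (x + y) z = Omega x z + Omega y z)
  (OmegaZ : forall (a : 'F_2) x y, Omega (a *: x) y = a * Omega x y)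
  (OmegaC : forall x y, Omega x y = Omega y x)
  (psi : {linear chain n.+1 k -> H})
  (W : {set 'I_n.+1}) (HW : #|W| = (2 * k + 3)%N)
  (v : 'I_n.+1) (Hv : v \in W) :
  \sum_(s : simplex n.+1 k) \sum_(t : simplex n.+1 k |
        [&& val s \subset W, val t \subset W,
            val s :&: val t == set0 & (enum_rank s < enum_rank t)%N])
     Omega (psi (echain s)) (psi (echain t))
  =
  \sum_(s : simplex n.+1 k) \sum_(t : simplex n.+1 k |
        [&& val s \subset W, val t \subset W,
            val s :&: val t == set0, v \notin val s, v \notin val t
          & (enum_rank s < enum_rank t)%N])
     Omega (psi (bnd k (v |: val s))) (psi (bnd k (v |: val t))).
Proof.
pose g a b := Omega (psi (echain a)) (psi (echain b)).
have gC a b : g a b = g b a by apply: OmegaC.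
have expand X Y : Omega (psi (bnd k X)) (psi (bnd k Y))
    = \sum_(a : simplex n.+1 k | val a \subset X)
      \sum_(b : simplex n.+1 k | val b \subset Y) g a b.
  by rewrite !bndE !raddf_sum Omega_sum.
transitivity (\sum_(s : simplex n.+1 k) \sum_(t : simplex n.+1 k |
    disjoint_in W (val s) (val t) && (enum_rank s < enum_rank t)%N) g s t).
  by apply: eq_bigr => s _; apply: eq_bigl => t; rewrite /disjoint_in !andbA.
rewrite -(sum_cone_pairs Hk Hv HW gC).
apply: eq_bigr => s _; under [RHS]eq_bigr do rewrite expand.
apply: eq_bigl => t; rewrite /disjoint_in !subsetD1.
by rewrite -!andbA; do !bool_congr.
Qed.
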